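(* Let $E$ be a strictly convex and reflexive Banach space, let $C\neq\emptyset$ be a closed convex subset of $E$, and let $\mathcal{S}=\{T_s: s\in S\}$ be a representation of a semigroup $S$ on $C$. If $A_C(\mathcal{S})\neq\emptyset$, then $F(\mathcal{S})\neq\emptyset$.
   Context: A representation of a semigroup $S$ on a set $C$ is a family $\{T_s:s\in S\}$ of maps $T_s:C\to C$ with $T_{st}=T_s\circ T_t$ for all $s,t\in S$ (no continuity or nonexpansiveness is assumed). A point $a\in E$ is an attractive point of $\mathcal{S}$ for $C$ if $\|a-T_sx\|\le\|a-x\|$ for all $x\in C$ and all $s\in S$; $A_C(\mathcal{S})$ denotes the set of all such points. $F(\mathcal{S})$ denotes the set of common fixed points, i.e. $x\in C$ with $T_sx=x$ for all $s\in S$. *)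

From HB Require Import structures.
From mathcomp Require Import all_boot all_order all_algebra.
From mathcomp Require Import all_classical all_reals topology normedtype.
Set Implicit Arguments. Unset Strict Implicit. Unset Printing Implicit Defensive.
Import Order.TTheory GRing.Theory Num.Theory.
Import numFieldNormedType.Exports.
Local Open Scope classical_set_scope.
Local Open Scope ring_scope.

Section Defs.
Context {R : realType} {E : normedModType R}.

Definition dual_elt (f : E -> R) : Prop :=
  [/\ (forall x y, f (x + y) = f x + f y),
      (forall (a : R) x, f (a *: x) = a * f x) & continuous f].

Definition opnorm_le (f : E -> R) (c : R) : Prop :=
  forall x, `|f x| <= c * `|x|.

Definition bidual_elt (Phi : (E -> R) -> R) : Prop :=
  [/\ (forall f g, dual_elt f -> dual_elt g -> Phi (f \+ g) = Phi f + Phi g),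
      (forall (a : R) f, dual_elt f -> Phi (fun x => a * f x) = a * Phi f) &
      exists M : R, forall f c, dual_elt f -> 0 <= c -> opnorm_le f c ->
        `|Phi f| <= M * c].

(* reflexive: the canonical embedding E -> E** is surjective *)
Definition reflexive_space : Prop :=
  forall Phi, bidual_elt Phi -> exists x : E, forall f, dual_elt f -> Phi f = f x.

Definition strictly_convex_space : Prop :=
  forall x y : E, `|x| = 1 -> `|y| = 1 -> x <> y -> `|(2%:R^-1) *: (x + y)| < 1.

Definition convex_subset (C : set E) : Prop :=
  forall x y, C x -> C y -> forall t : R, 0 <= t <= 1 -> C (t *: x + (1 - t) *: y).

Definition semigroup_op {S : Type} (op : S -> S -> S) : Prop :=
  forall s t u, op s (op t u) = op (op s t) u.

Definition representation {S : Type} (op : S -> S -> S) (C : set E)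
  (T : S -> E -> E) : Prop :=
  (forall s x, C x -> C (T s x)) /\
  (forall s t x, C x -> T (op s t) x = T s (T t x)).

Definition attractive_points {S : Type} (C : set E) (T : S -> E -> E) : set E :=
  [set a | forall x s, C x -> `|a - T s x| <= `|a - x|].

Definition common_fixed_points {S : Type} (C : set E) (T : S -> E -> E) : set E :=
  [set x | C x /\ forall s, T s x = x].
End Defs.

(* Let a be an attractive point and z a point of C nearest to a. Every T_s maps
   C into C without increasing the distance to a, so T_s z is again a nearest
   point; in a strictly convex space a convex set has at most one nearest
   point, hence T_s z = z.
   Nearest points exist in a reflexive space: along an ultrafilter, a
   minimizing sequence x converges in the bidual, f |-> lim f (x n), to an
   element represented by some z of E. For r > dist(a, C) the closed convex set
   C /\ B[a, r] eventually contains x and is weakly closed by Hahn-Banach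
   separation, so it contains z. Hahn-Banach is obtained from Zorn's lemma:
   a minimal sublinear functional below a given one is linear. *)

From HB Require Import structures.
From mathcomp Require Import all_boot all_order all_algebra.
From mathcomp Require Import all_classical all_reals topology normedtype.
From mathcomp Require Import lra.
Set Implicit Arguments. Unset Strict Implicit. Unset Printing Implicit Defensive.
Import Order.TTheory GRing.Theory Num.Theory.
Import numFieldNormedType.Exports.
Local Open Scope classical_set_scope.
Local Open Scope ring_scope.

Section Infimum.
Variable R : realType.
Implicit Types (A : set R) (m e : R).

Lemma ge_inf_lb A m e : (forall y, A y -> m <= y) -> A e -> inf A <= e.
Proof. by move=> lbA; apply: ge_inf; exists m. Qed.

Lemma inf_adherent_lb A m eps : 0 < eps -> A !=set0 -> (forall y, A y -> m <= y) ->
  exists2 e, A e & e < inf A + eps.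
Proof. by move=> eps0 A0 lbA; apply: inf_adherent => //; split => //; exists m. Qed.

End Infimum.

Section Sublinear.
Variables (R : realType) (V : lmodType R).
Implicit Types (q r : V -> R) (x y : V).

Definition sublinear q :=
  (forall x y, q (x + y) <= q x + q y) /\ (forall t x, 0 <= t -> q (t *: x) = t * q x).

Lemma sublinear0 q : sublinear q -> q 0 = 0.
Proof. by case=> _ qZ; rewrite -(scale0r (0 : V)) qZ // mul0r. Qed.

Lemma sublinear_oppr_le q x : sublinear q -> - q (- x) <= q x.
Proof. by move=> hq; have := hq.1 x (- x); rewrite subrr sublinear0 //; lra. Qed.

Lemma sublinear_of_superhomogeneous q :
  (forall x y, q (x + y) <= q x + q y) -> q 0 = 0 ->
  (forall s x, 0 < s -> s * q x <= q (s *: x)) -> sublinear q.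
Proof.
move=> qD q0 qZ; split => // t x; rewrite le0r => /orP[/eqP->|t0].
  by rewrite scale0r mul0r.
apply/eqP; rewrite eq_le qZ // andbT.
have := qZ t^-1 (t *: x); rewrite invr_gt0 => /(_ t0).
by rewrite scalerA mulVf ?gt_eqF // scale1r ler_pdivrMl // mulrC.
Qed.

Definition tilt q x y : R :=
  inf [set q (y + t *: x) - t * q x | t in [set t : R | 0 <= t]].

Variable q : V -> R.
Hypothesis hq : sublinear q.

Let tilt_term_ge x y t : 0 <= t -> - q (- y) <= q (y + t *: x) - t * q x.
Proof.
move=> t0; have := hq.1 (y + t *: x) (- y).
by rewrite addrAC subrr add0r (hq.2 _ _ t0); lra.
Qed.

Let tilt_terms_ne x y :
  [set q (y + t *: x) - t * q x | t in [set t : R | 0 <= t]] !=set0.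
Proof. by exists (q (y + 0 *: x) - 0 * q x); exists 0 => //=. Qed.

Lemma tilt_le x y t : 0 <= t -> tilt q x y <= q (y + t *: x) - t * q x.
Proof.
move=> t0; apply: (@ge_inf_lb _ _ (- q (- y))); last by exists t.
by move=> _ [s s0 <-]; apply: tilt_term_ge.
Qed.

Lemma tilt_le_self x y : tilt q x y <= q y.
Proof. by have := @tilt_le x y 0 (lexx _); rewrite scale0r addr0 mul0r subr0. Qed.

Lemma tilt_ge x y : - q (- y) <= tilt q x y.
Proof. by apply: lb_le_inf => // _ [s s0 <-]; apply: tilt_term_ge. Qed.

Lemma tilt_adherent x y eps : 0 < eps ->
  exists2 t, 0 <= t & q (y + t *: x) - t * q x < tilt q x y + eps.
Proof.
move=> eps0.
have [|_ [t t0 <-] ht] := @inf_adherent_lb _ _ (- q (- y)) _ eps0 (tilt_terms_ne x y).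
  by move=> _ [s s0 <-]; apply: tilt_term_ge.
by exists t.
Qed.

Lemma tilt_sublinear x : sublinear (tilt q x).
Proof.
apply: sublinear_of_superhomogeneous.
- move=> y1 y2; apply/ler_addgt0Pr => e e0.
  have e20 : 0 < e / 2 by rewrite divr_gt0.
  have [t1 t10 h1] := tilt_adherent x y1 e20.
  have [t2 t20 h2] := tilt_adherent x y2 e20.
  have := tilt_le x (y1 + y2) (addr_ge0 t10 t20).
  have := hq.1 (y1 + t1 *: x) (y2 + t2 *: x).
  rewrite addrACA -scalerDl.
  have := splitr e; lra.
- apply/eqP; rewrite eq_le; apply/andP; split.
    by have := tilt_le_self x 0; rewrite (sublinear0 hq).
  by have := tilt_ge x 0; rewrite oppr0 (sublinear0 hq); lra.
- move=> s y s0; apply: lb_le_inf => // _ [t t0 <-].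
  have ts0 : 0 <= t / s by rewrite divr_ge0 // ltW.
  have -> : s *: y + t *: x = s *: (y + (t / s) *: x).
    by rewrite scalerDr scalerA mulrCA mulfV ?gt_eqF // mulr1.
  have -> : t * q x = s * ((t / s) * q x).
    by rewrite mulrA mulrCA mulfV ?gt_eqF // mulr1.
  by rewrite (hq.2 _ _ (ltW s0)) -mulrBr ler_pM2l //; apply: tilt_le.
Qed.

End Sublinear.

Section HahnBanach.
Variables (R : realType) (V : lmodType R).
Implicit Types (p q r : V -> R) (x y : V).

(* A minimal [q] coincides with [tilt q x], and [tilt q x y <= q (y + x) - q x]
   turns subadditivity into additivity. *)
Lemma minimal_sublinear_linear q : sublinear q ->
  (forall r, sublinear r -> (forall v, r v <= q v) -> r = q) ->
  (forall x y, q (x + y) = q x + q y) /\ (forall t x, q (t *: x) = t * q x).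
Proof.
move=> hq qmin.
have qD x y : q (x + y) = q x + q y.
  apply/eqP; rewrite eq_le hq.1 /=.
  have qE := qmin _ (tilt_sublinear hq x) (tilt_le_self hq x).
  by have := tilt_le hq x y ler01; rewrite qE scale1r mul1r [y + x]addrC; lra.
split => // t x.
have qN : q (- x) = - q x by have := qD x (- x); rewrite subrr (sublinear0 hq); lra.
have [t0|t0] := leP 0 t; first exact: hq.2.
have -> : t *: x = (- t) *: (- x) by rewrite scaleNr scalerN opprK.
by rewrite hq.2 ?qN ?mulrNN // oppr_ge0 ltW.
Qed.

Section ChainInfimum.
Variables (p : V -> R) (A : set (V -> R)).
Hypotheses (A0 : A !=set0) (A_sub : forall a, A a -> sublinear a)
  (A_le : forall a v, A a -> a v <= p v)
  (A_chain : forall a b, A a -> A b ->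
     (forall v, a v <= b v) \/ (forall v, b v <= a v)).

Definition chain_inf v := inf [set a v | a in A].

Let chain_vals_lb v : forall c, [set a v | a in A] c -> - p (- v) <= c.
Proof.
move=> _ [a Aa <-]; apply: le_trans (sublinear_oppr_le v (A_sub Aa)).
by rewrite lerN2 A_le.
Qed.

Let chain_vals_ne v : [set a v | a in A] !=set0.
Proof. by have [a Aa] := A0; exists (a v), a. Qed.

Lemma chain_inf_le a v : A a -> chain_inf v <= a v.
Proof. by move=> Aa; apply: (ge_inf_lb (@chain_vals_lb v)); exists a. Qed.

Lemma chain_inf_sublinear : sublinear chain_inf.
Proof.
apply: sublinear_of_superhomogeneous.
- move=> x y; apply/ler_addgt0Pr => e e0.
  have e20 : 0 < e / 2 by rewrite divr_gt0.
  have [_ [a1 Aa1 <-] h1] :=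
    inf_adherent_lb e20 (@chain_vals_ne x) (@chain_vals_lb x).
  have [_ [a2 Aa2 <-] h2] :=
    inf_adherent_lb e20 (@chain_vals_ne y) (@chain_vals_lb y).
  have [c [Ac c1 c2]] : exists c, [/\ A c, c x <= a1 x & c y <= a2 y].
    have [h|h] := A_chain Aa1 Aa2; first by exists a1; split.
    by exists a2; split.
  have := chain_inf_le (x + y) Ac; have := (A_sub Ac).1 x y.
  rewrite /chain_inf in h1 h2 *; have := splitr e; lra.
- have [a Aa] := A0; apply/eqP; rewrite eq_le; apply/andP; split.
    by have := chain_inf_le 0 Aa; rewrite (sublinear0 (A_sub Aa)).
  by apply: lb_le_inf => // _ [b Ab <-]; rewrite (sublinear0 (A_sub Ab)).
- move=> s x s0; apply: lb_le_inf => // _ [a Aa <-].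
  by rewrite (A_sub Aa).2 ?(ltW s0) // ler_pM2l // chain_inf_le.
Qed.

End ChainInfimum.

Lemma exists_minimal_sublinear_le p : sublinear p -> exists q, [/\ sublinear q,
  (forall v, q v <= p v) & forall r, sublinear r -> (forall v, r v <= q v) -> r = q].
Proof.
move=> hp.
pose T := {q : V -> R | sublinear q /\ forall v, q v <= p v}.
pose geT (a b : T) := `[< forall v, sval b v <= sval a v >].
have [||||[q [hq qp]] qmin] := @Zorn T geT.
- by move=> a; apply/asboolP.
- move=> a b c /asboolP hab /asboolP hbc; apply/asboolP => v.
  exact: le_trans (hbc v) (hab v).
- move=> [a ha] [b hb] /asboolP hab /asboolP hba /=.
  have eab : a = b by apply: funext => v; apply/eqP; rewrite eq_le hab hba.
  by subst b; congr exist; exact: Prop_irrelevance.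
- move=> A Atot.
  have [A0|A0] := pselect (A !=set0); last first.
    by exists (exist _ p (conj hp (fun v => lexx _))) => a Aa; case: A0; exists a.
  pose B := sval @` A.
  have B0 : B !=set0 by case: A0 => a Aa; exists (sval a), a.
  have B_sub b : B b -> sublinear b by case=> a _ <-; exact: (svalP a).1.
  have B_le b v : B b -> b v <= p v by case=> a _ <-; exact: (svalP a).2.
  have B_chain b c : B b -> B c -> (forall v, b v <= c v) \/ (forall v, c v <= b v).
    case=> [a Aa <-] [a' Aa' <-].
    by case: (Atot _ _ Aa Aa') => /asboolP h; [right|left].
  have hinf := chain_inf_sublinear B0 B_sub B_le B_chain.
  have infp v : chain_inf B v <= p v.
    case: B0 => b Bb.
    exact: le_trans (chain_inf_le B_sub B_le v Bb) (B_le _ _ Bb).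
  exists (exist _ (chain_inf B) (conj hinf infp)) => a Aa; apply/asboolP => v /=.
  by apply: (chain_inf_le B_sub B_le); exists a.
- exists q; split => // r hr rq.
  have rp v : r v <= p v by apply: le_trans (rq v) (qp v).
  by have [] := qmin (exist _ r (conj hr rp)) (asboolT rq).
Qed.

Theorem hahn_banach p x0 : sublinear p -> exists f : V -> R,
  [/\ (forall x y, f (x + y) = f x + f y), (forall t x, f (t *: x) = t * f x),
      (forall v, f v <= p v) & f x0 = p x0].
Proof.
move=> hp.
have [q [hq qp qmin]] := exists_minimal_sublinear_le (tilt_sublinear hp x0).
have [qD qZ] := minimal_sublinear_linear hq qmin.
have qlep v : q v <= p v := le_trans (qp v) (tilt_le_self hp x0 v).
exists q; split => //; apply/eqP; rewrite eq_le qlep /=.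
have := qp (- x0); have := tilt_le hp x0 (- x0) ler01.
by rewrite scale1r addNr (sublinear0 hp) mul1r -scaleN1r qZ; lra.
Qed.

End HahnBanach.

Section Separation.
Variables (R : realType) (E : normedModType R).
Implicit Types (K : set E) (f : E -> R).

Lemma closed_not_mem_dist_gt0 K x : closed K -> ~ K x ->
  exists2 e : R, 0 < e & forall k, K k -> e <= `|x - k|.
Proof.
move=> clK Kx.
have /nbhs_ballP[e e0 he] : nbhs x (~` K).
  by apply: open_nbhs_nbhs; split => //; exact: closed_openC.
exists e => // k Kk; rewrite leNgt; apply/negP => xk.
by apply: (he k) => //; rewrite -ball_normE.
Qed.

Lemma bounded_linear_continuous f c :
  (forall x y, f (x + y) = f x + f y) -> (forall t x, f (t *: x) = t * f x) ->
  0 <= c -> (forall v, `|f v| <= c * `|v|) -> continuous f.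
Proof.
move=> fD fZ c0 fc z; apply/cvgrPdist_lt => e e0.
have fB u v : f (u - v) = f u - f v by rewrite fD -scaleN1r fZ mulN1r.
have c1 : 0 < c + 1 by rewrite ltr_wpDl.
have ec : 0 < e / (c + 1) by rewrite divr_gt0.
near=> t; rewrite -fB; apply: le_lt_trans (fc _) _.
have : `|z - t| < e / (c + 1).
  by near: t; exact: (@cvgr_dist_lt _ _ _ (nbhs z) _ id z (@cvg_id _ _) _ ec).
rewrite ltr_pdivlMr // => zt; apply: le_lt_trans zt.
by rewrite mulrDr mulr1 ler_wpDr // mulrC.
Unshelve. all: by end_near.
Qed.

Lemma dual_elt_bounded f :
  dual_elt f -> exists2 c, 0 <= c & forall v, `|f v| <= c * `|v|.
Proof.
case=> fD fZ fc.
have f0 : f 0 = 0 by rewrite -(scale0r (0 : E)) fZ mul0r.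
have /nbhs_ballP[del /= del0 hdel] : nbhs (0 : E) [set t | `|f 0 - f t| < 1].
  exact: (@cvgr_dist_lt _ _ _ _ _ f (f 0) (fc 0) _ ltr01).
exists (2 / del); first by rewrite divr_ge0 // ltW.
move=> v; have [->|v0] := eqVneq v 0; first by rewrite f0 !normr0 mulr0.
have nv0 : 0 < `|v| by rewrite normr_gt0.
pose k := del / (2 * `|v|).
have k0 : 0 < k by rewrite divr_gt0 // mulr_gt0.
have : ball (0 : E) del (k *: v).
  rewrite -ball_normE /ball_ /= sub0r normrN normrZ gtr0_norm //.
  have -> : k * `|v| = del / 2.
    by rewrite /k invfM mulrA -mulrA mulVf ?gt_eqF // mulr1.
  by rewrite ltr_pdivrMr // ltr_pMr // ltr1n.
move=> /hdel /=; rewrite f0 sub0r normrN fZ normrM gtr0_norm // => fkv.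
have -> : 2 / del * `|v| = k^-1 by rewrite /k invf_div mulrAC.
by rewrite -(ler_pM2l k0) mulfV ?gt_eqF // ltW.
Qed.

Section ThickGauge.
Variables (K : set E) (y0 : E) (eps : R).
Hypotheses (Ky0 : K y0) (eps0 : 0 < eps).

Let gauge_set v := [set t : R | 0 < t /\
  exists2 k, K k & `|v - t *: (k - y0)| <= t * eps].

(* The Minkowski functional of the neighbourhood [(K - y0) + closed_ball 0 eps]
   of the origin. *)
Definition thick_gauge v := inf (gauge_set v).

Let gauge_set_ge0 v : forall t, gauge_set v t -> 0 <= t.
Proof. by move=> t [t0 _]; exact: ltW. Qed.

Let gauge_set_norm v t : 0 < t -> `|v| <= t * eps -> gauge_set v t.
Proof. by move=> t0 vt; split => //; exists y0; rewrite // subrr scaler0 subr0. Qed.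

Let gauge_set_ne v : gauge_set v !=set0.
Proof.
exists (`|v| / eps + 1); apply: gauge_set_norm.
  by rewrite ltr_wpDl // divr_ge0 // ltW.
by rewrite mulrDl mul1r divfK ?gt_eqF // ler_wpDr // ltW.
Qed.

Lemma thick_gauge_ge0 v : 0 <= thick_gauge v.
Proof. exact: lb_le_inf (@gauge_set_ne v) (@gauge_set_ge0 v). Qed.

Lemma thick_gauge_le_norm v : thick_gauge v <= `|v| / eps.
Proof.
apply/ler_addgt0Pr => e e0; apply: (ge_inf_lb (@gauge_set_ge0 v)).
apply: gauge_set_norm; first by rewrite ltr_wpDl // divr_ge0 // ltW.
by rewrite mulrDl divfK ?gt_eqF // ler_wpDr // mulr_ge0 // ltW.
Qed.

Lemma thick_gauge_le1 k w : K k -> `|w| <= eps -> thick_gauge (k - y0 + w) <= 1.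
Proof.
move=> Kk w_eps; apply: (ge_inf_lb (@gauge_set_ge0 _)); split => //.
by exists k; rewrite // scale1r addrAC subrr add0r mul1r.
Qed.

Hypothesis K_convex : convex_subset K.

Lemma thick_gauge_ge1 x e : eps < e -> (forall k, K k -> e <= `|x - k|) ->
  1 <= thick_gauge (x - y0).
Proof.
move=> eps_e x_far; rewrite leNgt; apply/negP => lt1.
have d0 : 0 < 1 - thick_gauge (x - y0) by rewrite subr_gt0.
have [t [t0 [k Kk hk]] ht] :=
  inf_adherent_lb d0 (@gauge_set_ne (x - y0)) (@gauge_set_ge0 (x - y0)).
have t1 : t < 1 by move: ht; rewrite -/(thick_gauge _); lra.
have /x_far : K (t *: k + (1 - t) *: y0) by apply: K_convex; rewrite ?ltW.
have -> : x - (t *: k + (1 - t) *: y0) = x - y0 - t *: (k - y0).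
  rewrite scalerBl scale1r scalerBr !opprD !opprK !addrA.
  by congr (_ + _); exact: addrAC.
have : t * eps < 1 * eps by rewrite ltr_pM2r.
by move: hk; lra.
Qed.

Lemma thick_gauge_sublinear : sublinear thick_gauge.
Proof.
apply: sublinear_of_superhomogeneous.
- move=> v w; apply/ler_addgt0Pr => e e0.
  have e20 : 0 < e / 2 by rewrite divr_gt0.
  have [t1 [t10 [k1 Kk1 h1]] a1] :=
    inf_adherent_lb e20 (@gauge_set_ne v) (@gauge_set_ge0 v).
  have [t2 [t20 [k2 Kk2 h2]] a2] :=
    inf_adherent_lb e20 (@gauge_set_ne w) (@gauge_set_ge0 w).
  have t12 : 0 < t1 + t2 by rewrite addr_gt0.
  pose l := t1 / (t1 + t2).
  have l1 : (t1 + t2) * l = t1 by rewrite mulrCA mulfV ?gt_eqF // mulr1.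
  have l2 : (t1 + t2) * (1 - l) = t2 by rewrite mulrBr mulr1 l1 addrAC subrr add0r.
  have : gauge_set (v + w) (t1 + t2).
    split => //; exists (l *: k1 + (1 - l) *: k2).
      apply: K_convex => //; rewrite /l divr_ge0 ?ltW //=.
      by rewrite ltr_pdivrMr // mul1r ltrDl.
    have -> : v + w - (t1 + t2) *: (l *: k1 + (1 - l) *: k2 - y0) =
        (v - t1 *: (k1 - y0)) + (w - t2 *: (k2 - y0)).
      have -> : l *: k1 + (1 - l) *: k2 - y0 = l *: (k1 - y0) + (1 - l) *: (k2 - y0).
        by rewrite !scalerBr addrACA -opprD -scalerDl subrKC scale1r.
      by rewrite scalerDr !scalerA l1 l2 opprD addrACA.
    by apply: le_trans (ler_normD _ _) _; rewrite mulrDl lerD.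
  move=> /(ge_inf_lb (@gauge_set_ge0 _)).
  by rewrite -/(thick_gauge _) in a1 a2 *; have := splitr e; lra.
- apply/eqP; rewrite eq_le thick_gauge_ge0 andbT.
  apply/ler_addgt0Pr => e e0; rewrite add0r.
  apply: (ge_inf_lb (@gauge_set_ge0 _)); apply: gauge_set_norm => //.
  by rewrite normr0 mulr_ge0 // ltW.
- move=> s v s0; apply: lb_le_inf (gauge_set_ne _) _ => t [t0 [k Kk hk]].
  rewrite -ler_pdivlMl // mulrC; apply: (ge_inf_lb (@gauge_set_ge0 v)).
  split; first by rewrite divr_gt0.
  exists k => //.
  have -> : v - t / s *: (k - y0) = s^-1 *: (s *: v - t *: (k - y0)).
    by rewrite [RHS]scalerBr !scalerA mulVf ?gt_eqF // scale1r [s^-1 * t]mulrC.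
  by rewrite normrZ gtr0_norm ?invr_gt0 // (mulrC t) -mulrA ler_pM2l ?invr_gt0.
Qed.

End ThickGauge.

Theorem convex_separation K x y0 : convex_subset K -> closed K -> K y0 -> ~ K x ->
  exists f, dual_elt f /\ exists2 g, g < f x & forall k, K k -> f k <= g.
Proof.
move=> cK clK Ky0 Kx.
have [e e0 x_far] := closed_not_mem_dist_gt0 clK Kx.
have eps0 : 0 < e / 2 by rewrite divr_gt0.
have eps_e : e / 2 < e by rewrite ltr_pdivrMr // ltr_pMr // ltr1n.
have [f [fD fZ fp fx]] := hahn_banach (x - y0) (thick_gauge_sublinear Ky0 eps0 cK).
have fN u : f (- u) = - f u by rewrite -scaleN1r fZ mulN1r.
have fx1 : 1 <= f (x - y0) by rewrite fx (thick_gauge_ge1 Ky0 eps0 cK eps_e x_far).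
have f_norm v : f v <= `|v| / (e / 2).
  exact: le_trans (fp v) (thick_gauge_le_norm Ky0 eps0 v).
exists f; split.
  split => //; apply: (@bounded_linear_continuous _ (e / 2)^-1) => //.
    by rewrite invr_ge0 ltW.
  move=> v; rewrite ler_norml mulrC f_norm andbT lerNl -fN.
  by rewrite -normrN f_norm.
pose s := e / 2 / (`|x - y0| + 1).
have s0 : 0 < s by rewrite divr_gt0 // ltr_wpDl.
have sx : `|s *: (x - y0)| <= e / 2.
  rewrite normrZ gtr0_norm // /s mulrAC ler_pdivrMr ?ltr_wpDl //.
  by rewrite ler_pM2l // lerDl.
exists (f y0 + 1 - s).
  have -> : f x = f (x - y0) + f y0 by rewrite -fD subrK.
  by move: fx1 s0; lra.
move=> k Kk; have := le_trans (fp _) (thick_gauge_le1 _ Kk sx).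
rewrite fD fZ [f (k - y0)]fD fN.
have : s <= s * f (x - y0) by rewrite ler_peMr // ltW.
by lra.
Qed.

End Separation.

Section UltraLimit.
Variables (R : realType) (I : Type) (U : set_system I).
Hypothesis U_ultra : UltraFilter U.
Implicit Types (u v : I -> R) (M g : R).

Let U_proper : ProperFilter U. Proof. exact: ultra_proper. Qed.
#[local] Existing Instance U_proper.

Lemma ultra_fmap (T : Type) (u : I -> T) : UltraFilter (u @ U).
Proof.
split; first exact: fmap_proper_filter.
move=> G GF sG; rewrite predeqE => A; split; last exact: sG.
move=> GA; have [//|UnA] := in_ultra_setVsetC (u @^-1` A) U_ultra.
have GnA : G (~` A) by apply: sG.
by have /filter_ex[? []] : G (A `&` ~` A) by exact: filterI.
Qed.

Definition ulim u := lim (u @ U).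

Lemma ulim_cvg u M : (forall i, `|u i| <= M) -> u @ U --> ulim u.
Proof.
move=> uM; have := @segment_compact R (- M) M.
rewrite compact_ultra => /(_ _ (ultra_fmap u)) [|l [_ ul]].
  by apply: (@filterE _ U) => i /=; rewrite in_itv /= -ler_norml.
by rewrite /ulim (cvg_lim _ ul).
Qed.

Lemma ulimD u v M : (forall i, `|u i| <= M) -> (forall i, `|v i| <= M) ->
  ulim (fun i => u i + v i) = ulim u + ulim v.
Proof. by move=> uM vM; exact: cvg_lim (cvgD (ulim_cvg uM) (ulim_cvg vM)). Qed.

Lemma ulimZ u a M : (forall i, `|u i| <= M) -> ulim (fun i => a * u i) = a * ulim u.
Proof. by move=> uM; exact: cvg_lim (cvgMl_tmp (ulim_cvg uM)). Qed.

Lemma ulim_le u M g : (forall i, `|u i| <= M) -> U [set i | u i <= g] -> ulim u <= g.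
Proof. by move=> uM ug; exact: closed_cvg _ (@closed_le _ g) ug _ (ulim_cvg uM). Qed.

Lemma ulim_ge u M g : (forall i, `|u i| <= M) -> U [set i | g <= u i] -> g <= ulim u.
Proof. by move=> uM ug; exact: closed_cvg _ (@closed_ge _ g) ug _ (ulim_cvg uM). Qed.

Lemma ulim_norm_le u M : (forall i, `|u i| <= M) -> `|ulim u| <= M.
Proof.
move=> uM; rewrite ler_norml; apply/andP.
split; [apply: (ulim_ge uM)|apply: (ulim_le uM)];
  by apply: filterE => i /=; have /andP[] : - M <= u i <= M by rewrite -ler_norml.
Qed.

End UltraLimit.

Section WeakUltraLimit.
Variables (R : realType) (E : normedModType R) (I : Type) (U : set_system I).
Hypothesis U_ultra : UltraFilter U.
Variables (x : I -> E) (M : R).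
Hypothesis x_bounded : forall i, `|x i| <= M.

Lemma dual_elt_bounded_family f : dual_elt f -> exists B, forall i, `|f (x i)| <= B.
Proof.
move=> /dual_elt_bounded[c c0 fc]; exists (c * M) => i.
by apply: le_trans (fc _) _; rewrite ler_wpM2l.
Qed.

Lemma ulim_bidual : bidual_elt (fun f : E -> R => ulim U (fun i => f (x i))).
Proof.
split.
- move=> f g /dual_elt_bounded_family[B fB] /dual_elt_bounded_family[B' gB].
  pose N := Num.max B B'.
  have fN i : `|f (x i)| <= N by rewrite le_max fB.
  have gN i : `|g (x i)| <= N by rewrite le_max gB orbT.
  exact: ulimD fN gN.
- by move=> a f /dual_elt_bounded_family[B fB]; exact: ulimZ fB.
- exists M => f c _ c0 fc; rewrite mulrC; apply: ulim_norm_le => // i.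
  by apply: le_trans (fc _) _; rewrite ler_wpM2l.
Qed.

Lemma weak_ulim_mem (K : set E) z : convex_subset K -> closed K ->
  U [set i | K (x i)] -> (forall f, dual_elt f -> ulim U (fun i => f (x i)) = f z) ->
  K z.
Proof.
move=> cK clK xK zE; apply: contrapT => Kz.
have U_proper : ProperFilter U by exact: ultra_proper.
have [i Kxi] := filter_ex xK.
have [f [df [g gz fK]]] := convex_separation cK clK Kxi Kz.
have [B fB] := dual_elt_bounded_family df.
have : ulim U (fun i => f (x i)) <= g.
  by apply: (ulim_le U_ultra fB); apply: filterS xK => j /fK.
by rewrite zE //; lra.
Qed.

End WeakUltraLimit.

Section NearestPoint.
Variables (R : realType) (E : normedModType R).
Implicit Types (C K : set E) (a u v w y z : E).

Lemma convex_subsetI C K :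
  convex_subset C -> convex_subset K -> convex_subset (C `&` K).
Proof. by move=> cC cK x y [Cx Kx] [Cy Ky] t t01; split; [exact: cC | exact: cK]. Qed.

Lemma convex_subset_dist_le a r : convex_subset [set y | `|a - y| <= r].
Proof.
move=> x y /= ax ay t /andP[t0 t1].
have -> : a - (t *: x + (1 - t) *: y) = t *: (a - x) + (1 - t) *: (a - y).
  by rewrite !scalerBr addrACA -scalerDl subrKC scale1r opprD.
apply: le_trans (ler_normD _ _) _; rewrite !normrZ !ger0_norm ?subr_ge0 //.
have : t * `|a - x| <= t * r by rewrite ler_wpM2l.
have : (1 - t) * `|a - y| <= (1 - t) * r by rewrite ler_wpM2l // subr_ge0.
by lra.
Qed.

Lemma closed_dist_le a r : closed [set y : E | `|a - y| <= r].
Proof.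
apply: (preimage_closed _ (@closed_le _ r)) => y _.
by apply: cvg_norm; apply: cvgB => //; exact: cvg_cst.
Qed.

Definition set_dist a C := inf [set `|a - y| | y in C].

Lemma set_dist_le a C y : C y -> set_dist a C <= `|a - y|.
Proof. by move=> Cy; apply: (@ge_inf_lb _ _ 0) => [_ [? _ <-]|]; last exists y. Qed.

Lemma exists_minimizing_sequence a C : C !=set0 -> exists x : nat -> E,
  (forall n, C (x n)) /\ (forall n, `|a - x n| < set_dist a C + n.+1%:R^-1).
Proof.
move=> [y0 Cy0].
have dists_ge0 t : [set `|a - y| | y in C] t -> 0 <= t by case=> y _ <-.
have dists_ne : [set `|a - y| | y in C] !=set0 by exists `|a - y0|, y0.
have near_min n : exists y, C y /\ `|a - y| < set_dist a C + n.+1%:R^-1.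
  have n0 : 0 < (n.+1%:R : R)^-1 by rewrite invr_gt0 ltr0Sn.
  by have [_ [y Cy <-] ay] := inf_adherent_lb n0 dists_ne dists_ge0; exists y.
by have [x hx] := choice near_min; exists x; split => n; have [] := hx n.
Qed.

Lemma strictly_convex_midpoint_lt u v d : strictly_convex_space (E := E) ->
  0 < d -> `|u| = d -> `|v| = d -> u <> v -> `|2%:R^-1 *: (u + v)| < d.
Proof.
move=> sc d0 ud vd uv.
have dK w : d *: (d^-1 *: w) = w by rewrite scalerA mulfV ?gt_eqF // scale1r.
have dV w : `|w| = d -> `|d^-1 *: w| = 1.
  by move=> wd; rewrite normrZ gtr0_norm ?invr_gt0 // wd mulVf ?gt_eqF.
have uv' : d^-1 *: u <> d^-1 *: v by move=> /(congr1 (fun w => d *: w)); rewrite !dK.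
have := sc _ _ (dV _ ud) (dV _ vd) uv'.
rewrite -scalerDr scalerA mulrC -scalerA normrZ gtr0_norm ?invr_gt0 //.
by rewrite -(ltr_pM2l d0) mulrA mulfV ?gt_eqF // mul1r mulr1.
Qed.

Lemma strictly_convex_nearest_uniq C a z w : strictly_convex_space (E := E) ->
  convex_subset C -> C z -> (forall y, C y -> `|a - z| <= `|a - y|) ->
  C w -> `|a - w| <= `|a - z| -> w = z.
Proof.
move=> sc cC Cz z_min Cw aw.
have wE : `|a - w| = `|a - z| by apply/eqP; rewrite eq_le aw z_min.
have [az0|az0] := eqVneq `|a - z| 0.
  by move: wE; rewrite az0 => /normr0_eq0/subr0_eq <-; apply/subr0_eq/normr0_eq0.
apply: contrapT => wz.
pose h : R := 2%:R^-1.
have h1 : 1 - h = h by rewrite {1}(splitr 1) mul1r addrK.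
have h01 : 0 <= h <= 1 by rewrite invr_ge0 ler0n /= invf_le1 ?ler1n // ltr0n.
have /z_min := cC w z Cw Cz h h01; apply/negP; rewrite -ltNge.
have -> : a - (h *: w + (1 - h) *: z) = h *: ((a - w) + (a - z)).
  have aE : a = h *: (a + a) by rewrite scalerDr -scalerDl -{1}h1 subrK scale1r.
  by rewrite h1 {1}aE -scalerDr -scalerBr opprD addrACA.
apply: strictly_convex_midpoint_lt => //; first by rewrite lt0r az0 normr_ge0.
by move=> /addrI /oppr_inj.
Qed.

Lemma reflexive_nearest_point C a :
  reflexive_space (E := E) -> C !=set0 -> closed C -> convex_subset C ->
  exists2 z, C z & forall y, C y -> `|a - z| <= `|a - y|.
Proof.
move=> refl C0 clC cC; set d := set_dist a C.
have [x [xC xd]] := exists_minimizing_sequence a C0.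
have x_bounded n : `|x n| <= `|a| + d + 1.
  have := ler_normB a (a - x n); rewrite opprB subrKC => /le_trans; apply.
  rewrite -addrA lerD2l ltW // (lt_le_trans (xd n)) // lerD2l.
  by rewrite invf_le1 // ler1n.
have [U [U_ultra U_oo]] := @ultraFilterLemma nat \oo _.
have [z zE] := refl _ (ulim_bidual U_ultra x_bounded).
have z_near r : d < r -> C z /\ `|a - z| <= r.
  move=> dr; suff : (C `&` [set y | `|a - y| <= r]) z by [].
  apply: (weak_ulim_mem U_ultra x_bounded) => //.
  - exact: convex_subsetI cC (@convex_subset_dist_le a r).
  - exact: closedI clC (@closed_dist_le a r).
  - have [N dN] := ltr_add_invr dr.
    apply: U_oo; exists N => // n /= Nn; split => //=.
    apply/ltW/(lt_trans (xd n))/(le_lt_trans _ dN); rewrite lerD2l.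
    by rewrite lef_pV2 ?posrE // ler_nat.
have [Cz _] : C z /\ `|a - z| <= d + 1 by apply: z_near; rewrite ltrDl.
exists z => // y Cy; apply: le_trans (set_dist_le a Cy).
by apply/ler_addgt0Pr => e e0; apply: (z_near _ _).2; rewrite ltrDl.
Qed.

End NearestPoint.

Unset Implicit Arguments.

Theorem lemma3p1 (R : realType) (E : completeNormedModType R)
  (S : Type) (op : S -> S -> S) (C : set E) (T : S -> E -> E) :
  strictly_convex_space (E := E) -> reflexive_space (E := E) ->
  C !=set0 -> closed C -> convex_subset C ->
  semigroup_op op -> representation op C T ->
  attractive_points C T !=set0 -> common_fixed_points C T !=set0.
Proof.
move=> sc refl C0 clC cC _ [T_C _] [a a_attr].
have [z Cz z_nearest] := reflexive_nearest_point a refl C0 clC cC.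
exists z; split => // s.
exact: strictly_convex_nearest_uniq sc cC Cz z_nearest (T_C s z Cz) (a_attr z s Cz).
Qed.
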